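(* Let $r\ge2$, $d=r-1$, and let $s_1,\dots,s_r$ be independent indeterminates over $\mathbb{Q}$, $s_0=1$, $s_i=0$ for $i<0$ or $i>r$, $f(x)=x^r+s_1x^{r-1}+\cdots+s_r$. Define $d\times d$ matrices $X_1,X_2,X_3,X_4$ by: $(X_1)_{i,j}=(j-i)s_{r-(j-i)}$ if $j\ge i$ and $0$ otherwise; $(X_2)_{i,j}=s_{i-j}$; $(X_3)_{i,j}=s_{r-(j-i)}$ if $j\ge i$ and $0$ otherwise; $(X_4)_{i,j}=(r-(i-j))s_{i-j}$ if $i\ge j$ and $0$ otherwise. Let $u$ be the column vector with $i$-th entry $(r-i)s_i$ and $w$ the row vector with $j$-th entry $(r-j)s_{r-j}$ ($1\le i,j\le d$). Then \[ -X_1X_2+X_3X_4-\frac1r\,u\,w=J\,\mathrm{Bez}\Bigl(f'(x),\,f(x)-\tfrac1r xf'(x)\Bigr), \] where $J$ is the $d\times d$ matrix with ones on the antidiagonal and zeros elsewhere.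
   Context: For polynomials $F,G$ with $D=\max(\deg F,\deg G)$, the Bézout matrix $\mathrm{Bez}(F,G)$ is the $D\times D$ matrix defined by $\frac{F(x)G(y)-F(y)G(x)}{x-y}=(1,x,\ldots,x^{D-1})\,\mathrm{Bez}(F,G)\,(1,y,\ldots,y^{D-1})^T$. Here $f'(x)$ has degree $r-1$ and $f(x)-\frac1r xf'(x)$ has degree at most $r-1$, so the Bézout matrix is $(r-1)\times(r-1)$. *)

From HB Require Import structures.
From mathcomp Require Import all_boot all_order all_algebra.
From mathcomp Require Import mpoly.
Set Implicit Arguments. Unset Strict Implicit. Unset Printing Implicit Defensive.
Import GRing.Theory.
Local Open Scope ring_scope.

(* Bezout matrix of F, G (n x n, intended n = max(deg F, deg G)):
   (F(x)G(y) - F(y)G(x)) / (x - y) = sum_{i,j<n} B_ij x^i y^j.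
   Bivariate polynomials are {poly {poly R}}: outer variable x, inner y.
   The division is exact; it is computed by pseudo-division by the monic
   (in x) polynomial x - y. *)
Definition bezout_quot (R : comNzRingType) (F G : {poly R}) : {poly {poly R}} :=
  Pdiv.Ring.rdivp (F^:P * G%:P - G^:P * F%:P) ('X - ('X)%:P).

Definition bezout (R : comNzRingType) (n : nat) (F G : {poly R}) : 'M[R]_n :=
  \matrix_(i < n, j < n) ((bezout_quot F G)`_i)`_j.

Definition sgen (r : nat) (k : int) : {mpoly rat[r]} :=
  match k with
  | Posz 0 => 1
  | Posz k' => oapp (fun i : 'I_r => 'X_i) 0 (insub k'.-1)
  | Negz _ => 0
  end.

Definition fgen (r : nat) : {poly {mpoly rat[r]}} :=
  \sum_(k < r.+1) (sgen r k)%:P * 'X^(r - k).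

Definition ggen (r : nat) : {poly {mpoly rat[r]}} :=
  fgen r - ((r%:R^-1 : rat)%:MP)%:P * ('X * (fgen r)^`()).

(* Matrices of the statement; the paper's indices 1..d correspond to the
   ordinals 0..d-1 (i = i0+1, j = j0+1); differences j-i are unchanged. *)
Definition X1 (r : nat) : 'M[{mpoly rat[r]}]_(r.-1) :=
  \matrix_(i, j) (if (i <= j)%N then
                    ((j - i)%N%:R * sgen r (r%:Z - (j - i)%N%:Z)) else 0).
Definition X2 (r : nat) : 'M[{mpoly rat[r]}]_(r.-1) :=
  \matrix_(i, j) sgen r (i%:Z - j%:Z).
Definition X3 (r : nat) : 'M[{mpoly rat[r]}]_(r.-1) :=
  \matrix_(i, j) (if (i <= j)%N then sgen r (r%:Z - (j - i)%N%:Z) else 0).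
Definition X4 (r : nat) : 'M[{mpoly rat[r]}]_(r.-1) :=
  \matrix_(i, j) (if (j <= i)%N then
                    ((r - (i - j))%N%:R * sgen r (i%:Z - j%:Z)) else 0).
Definition ucol (r : nat) : 'cV[{mpoly rat[r]}]_(r.-1) :=
  \col_i ((r - i.+1)%N%:R * sgen r (i.+1)%:Z).
Definition wrow (r : nat) : 'rV[{mpoly rat[r]}]_(r.-1) :=
  \row_j ((r - j.+1)%N%:R * sgen r (r%:Z - (j.+1)%:Z)).
Definition Janti (R : nzRingType) (n : nat) : 'M[R]_n :=
  \matrix_(i, j) (if (i + j == n.-1)%N then 1 else 0).

(* Write f_m for the coefficient of x^m in f, so that s_k = f_(r-k).  The
   Bezout quotient Q of F and G satisfies Q(x,y) (x - y) = F(x) G(y) - G(x) F(y);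
   comparing the coefficients of x^(i+1) y^(j+1) gives the recursion
   Q_(i+1,j) = Q_(i,j+1) + G_(i+1) F_(j+1) - F_(i+1) G_(j+1), hence the closed form
   Q_ij = sum_(k <= i) (G_k F_(i+j+1-k) - F_k G_(i+j+1-k)).
   As Bez(f', x f') = - f'(x) f'(y), the part -(1/r) x f' of g only adds the
   rank-one term (1/r) f'_i f'_j, and by the closed form
   Bez(f', f)_ij = sum_(m <= i) (i+j+2-2m) f_m f_(i+j+2-m) - (i+1) f_(i+1) f_(j+1).
   Entry (i,j) of -X1 X2 + X3 X4 is this sum at row d-1-i (the row that J
   selects), u is J applied to the coefficients of f', and w_j = r f_(j+1) - f'_j
   splits (1/r) u w into the two remaining rank-one terms. *)

From mathcomp Require Import all_boot all_algebra.
From mathcomp Require Import mpoly.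
From mathcomp Require Import ring zify.
Set Implicit Arguments.
Unset Strict Implicit.
Unset Printing Implicit Defensive.

Import GRing.Theory Num.Theory.
Local Open Scope ring_scope.

Section BezoutQuotient.
Variable R : comNzRingType.
Implicit Types F G : {poly R}.

Lemma mul_bezout_quot F G :
  bezout_quot F G * ('X - ('X)%:P) = F^:P * G%:P - G^:P * F%:P.
Proof.
(* x - y divides, since substituting y for x gives F(y) G(y) - G(y) F(y). *)
apply: Pdiv.RingMonic.rdivpK; first exact: monicXsubC.
rewrite Pdiv.Ring.rdvdp_XsubCl /root !(hornerE, hornerM) -!/(comp_poly _ _).
by rewrite !comp_polyXr mulrC subrr.
Qed.

Lemma bezout_quot_unique F G Q :
  Q * ('X - ('X)%:P) = F^:P * G%:P - G^:P * F%:P -> bezout_quot F G = Q.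
Proof. by rewrite /bezout_quot => <-; apply/Pdiv.RingMonic.rdivp_mull/monicXsubC. Qed.

Lemma coef_bezout_quot F G i j :
  ((bezout_quot F G)`_i)`_j =
  \sum_(k < i.+1) (G`_k * F`_(i + j.+1 - k) - F`_k * G`_(i + j.+1 - k)).
Proof.
set Q := bezout_quot F G.
(* the coefficient of x^I y^(J+1) in Q (x - y) *)
have coefQ I J : (Q`_I)`_J =
    (if I is I'.+1 then (Q`_I')`_J.+1 else 0) + (G`_I * F`_J.+1 - F`_I * G`_J.+1).
  have := congr1 (fun P : {poly {poly R}} => (P`_I)`_J.+1) (mul_bezout_quot F G).
  rewrite !(mulrBr, coefB) coefMX coefMC coefMX !coefMC !coef_map !coefCM /=.
  by case: I => [|I] /= e; rewrite -opprB -e opprB ?coef0 addrC subrK.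
elim: i j => [|i IHi] j; rewrite coefQ.
  by rewrite big_ord1 add0n subn0 add0r.
by rewrite big_ord_recr /= addKn addSnnS -IHi.
Qed.

Lemma coef_bezout_quot_deriv F i j :
  ((bezout_quot F^`() F)`_i)`_j =
  \sum_(m < i.+1) ((i + j.+2 - m)%:R - m%:R) * (F`_m * F`_(i + j.+2 - m))
  - (F`_i.+1 * F`_j.+1) *+ i.+1.
Proof.
pose S m := F`_m * F`_(i + j.+2 - m).
have shiftS : \sum_(k < i.+1) (k.+1)%:R * S k.+1 =
    \sum_(m < i.+1) m%:R * S m + (i.+1)%:R * S i.+1.
  transitivity (\sum_(m < i.+2) m%:R * S m); last by rewrite big_ord_recr.
  by rewrite [RHS]big_ord_recl /= mul0r add0r.
have Slast : S i.+1 = F`_i.+1 * F`_j.+1 by rewrite /S; congr (_ * F`_ _); lia.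
rewrite coef_bezout_quot -mulr_natr (eq_bigr (fun k : 'I_i.+1 =>
    (i + j.+2 - k)%:R * S k - (k.+1)%:R * S k.+1)); last first.
  move=> k _; have hk := ltn_ord k; rewrite !coef_deriv /S.
  rewrite (_ : (i + j.+1 - k).+1 = i + j.+2 - k)%N; last lia.
  rewrite (_ : (i + j.+1 - k) = i + j.+2 - k.+1)%N; last lia.
  ring.
rewrite sumrB shiftS Slast /S.
under [in RHS]eq_bigr do rewrite mulrBl.
rewrite sumrB; ring.
Qed.

Lemma bezout_quot_subXmul F G a :
  bezout_quot F (G - a%:P * ('X * F)) = bezout_quot F G + a%:P%:P * (F^:P * F%:P).
Proof.
apply: bezout_quot_unique; rewrite mulrDl mul_bezout_quot.
rewrite !(rmorphB, rmorphM) /= map_polyC map_polyX /=; ring.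
Qed.

Lemma coef_mul_map_polyC F G i j : ((F^:P * G%:P)`_i)`_j = F`_i * G`_j.
Proof. by rewrite coefMC coef_map /= coefCM. Qed.

End BezoutQuotient.

Lemma mul_Janti_mx (R : nzRingType) n m (A : 'M[R]_(n, m)) :
  Janti R n *m A = \matrix_(i, j) A (rev_ord i) j.
Proof.
apply/matrixP => i j; have hi := ltn_ord i.
rewrite !mxE (bigD1 (rev_ord i)) //= big1 ?addr0.
  by rewrite mxE (_ : _ + _ == _) ?mul1r //; apply/eqP => /=; lia.
move=> k /eqP hk; rewrite mxE ifF ?mul0r //; apply/eqP => /eqP hik; apply: hk.
by apply: val_inj => /=; lia.
Qed.

Lemma sum_ord_if_leq_shift (V : nmodType) N i (h : nat -> V) :
  \sum_(k < N) (if (i <= k)%N then h (k - i)%N else 0) = \sum_(m < N - i) h m.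
Proof.
transitivity (\sum_(i <= k < N) h (k - i)%N).
  by rewrite [RHS](big_nat_widenl _ 0) // big_mkord [RHS]big_mkcond.
rewrite -[X in \sum_(X <= _ < _) _]add0n big_addn big_mkord.
by apply: eq_bigr => m _; rewrite addnK.
Qed.

Lemma sgen_lt0 r k : (k < 0)%R -> sgen r k = 0.
Proof. by case: k. Qed.

Lemma coef_fgen r m : (fgen r)`_m = sgen r (r%:Z - m%:Z).
Proof.
have -> : fgen r = \poly_(i < r.+1) sgen r (r%:Z - i%:Z).
  rewrite /fgen poly_def (reindex_inj rev_ord_inj).
  apply: eq_bigr => i _; rewrite -mul_polyC.
  have hi := ltn_ord i.
  congr ((sgen r _)%:P * 'X^_); rewrite /=; lia.
rewrite coef_poly; case: ltnP => // hm.
rewrite sgen_lt0 //; lia.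
Qed.

Lemma coef_fgen_gt r m : (r < m)%N -> (fgen r)`_m = 0.
Proof. by move=> hm; rewrite coef_fgen sgen_lt0 //; lia. Qed.

Section Entries.
Variable r : nat.
Implicit Types i j k : 'I_r.-1.

Lemma X1E i k : X1 r i k = if (i <= k)%N then (fgen r)`_(k - i) *+ (k - i) else 0.
Proof. by rewrite mxE coef_fgen mulr_natl. Qed.

Lemma X2E k j : X2 r k j = (fgen r)`_(r + j - k).
Proof. by rewrite mxE coef_fgen; congr sgen; have := ltn_ord k; lia. Qed.

Lemma X3E i k : X3 r i k = if (i <= k)%N then (fgen r)`_(k - i) else 0.
Proof. by rewrite mxE coef_fgen. Qed.

Lemma X4E k j : X4 r k j = (fgen r)`_(r + j - k) *+ (r + j - k).
Proof.
have hk := ltn_ord k; rewrite mxE; case: (leqP j k) => hjk.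
  by rewrite coef_fgen mulr_natl; congr (sgen _ _ *+ _); lia.
by rewrite coef_fgen_gt ?mul0rn //; lia.
Qed.

Lemma ucolE i : ucol r i 0 = (fgen r)`_(r - i.+1) *+ (r - i.+1).
Proof. by rewrite mxE coef_fgen mulr_natl; congr (sgen _ _ *+ _); have := ltn_ord i; lia. Qed.

Lemma wrowE j : wrow r 0 j = (fgen r)`_j.+1 *+ (r - j.+1).
Proof. by rewrite mxE coef_fgen mulr_natl. Qed.

End Entries.

Lemma X_products_entry n (i j : 'I_n.+1) :
  (- (X1 n.+2 *m X2 n.+2) + X3 n.+2 *m X4 n.+2) i j =
  \sum_(m < (n - i).+1) ((n - i + j.+2 - m)%:R - m%:R) *
    ((fgen n.+2)`_m * (fgen n.+2)`_(n - i + j.+2 - m)).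
Proof.
pose h m := ((n - i + j.+2 - m)%:R - m%:R) *
  ((fgen n.+2)`_m * (fgen n.+2)`_(n - i + j.+2 - m)).
have hi := ltn_ord i; rewrite -[RHS]/(\sum_(m < _) h m) -subSn //.
rewrite -sum_ord_if_leq_shift !mxE -sumrN -big_split /=; apply: eq_bigr => k _.
rewrite X1E X2E X3E X4E /=; case: leqP => hik; last by rewrite !mul0r oppr0 addr0.
have hk := ltn_ord k.
rewrite (_ : n.+2 + j - k = n - i + j.+2 - (k - i))%N; last lia.
rewrite /h; ring.
Qed.

Lemma mulrn_inv_split (R : nzRingType) (c x : R) a b :
  c * (a + b)%:R = 1 -> c * (x *+ a) = x - c * (x *+ b).
Proof.
move=> cK; rewrite -[X in X - _]mul1r -cK -mulrA mulr_natl mulrnDr mulrDr.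
by rewrite addrK.
Qed.

Theorem proposition6 (r : nat) (hr : (2 <= r)%N) :
  - (X1 r *m X2 r) + X3 r *m X4 r
    - ((r%:R^-1 : rat)%:MP) *: (ucol r *m wrow r)
  = Janti _ (r.-1) *m bezout r.-1 (fgen r)^`() (ggen r).
Proof.
case: r hr => [|[|n]] // _; apply/matrixP => i j.
rewrite [in LHS]mxE X_products_entry mul_Janti_mx !mxE big_ord1 ucolE wrowE.
rewrite /ggen bezout_quot_subXmul coefD coefCM coefD coefCM.
rewrite coef_mul_map_polyC coef_bezout_quot_deriv /= !coef_deriv !subSS.
have hj := ltn_ord j; have hi := ltn_ord i.
have cK : ((n.+2)%:R^-1 : rat)%:MP * ((n.+1 - j) + j.+1)%:R = 1 :> {mpoly rat[n.+2]}.
  rewrite (_ : n.+1 - j + j.+1 = n.+2)%N; last lia.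
  by rewrite -mpolyC_nat -mpolyCM mulVf ?mpolyC1 // pnatr_eq0.
rewrite -subSn // mulrnAr (mulrn_inv_split _ cK); ring.
Qed.
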